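(* Let $\Gamma$ be a connected connected-homogeneous locally-finite bipartite graph with bipartition $X\cup Y$. If $\Gamma$ is not a tree and has at least one vertex of degree greater than $2$, then $\Gamma$ embeds the $4$-cycle $C_4$ as an induced subgraph.
   Context: A bipartite graph with given bipartition $X\cup Y$ is a connected-homogeneous bipartite graph if every isomorphism between finite connected induced subgraphs mapping vertices of $X$ to vertices of $X$ and vertices of $Y$ to vertices of $Y$ extends to an automorphism of the graph preserving $X$ and $Y$ setwise. Locally-finite: every vertex has finite degree. *)

From Stdlib Require Import List.
Import ListNotations.

Section Graphs.
Context {V : Type} (adj : V -> V -> Prop).

Definition simple_graph : Prop :=
  (forall x y, adj x y -> adj y x) /\ (forall x, ~ adj x x).

(* bipartite with given bipartition: X = {v | side v = true}, Y = {v | side v = false} *)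
Definition bipartite_wrt (side : V -> bool) : Prop :=
  forall x y, adj x y -> side x <> side y.

Inductive walk_in (P : V -> Prop) : V -> V -> Prop :=
| walk_refl x : P x -> walk_in P x x
| walk_step x z y : P x -> adj x z -> walk_in P z y -> walk_in P x y.

Definition connected : Prop := forall x y, walk_in (fun _ => True) x y.

Definition locally_finite : Prop :=
  forall v, exists l : list V, forall w, adj v w -> In w l.

Fixpoint chain (l : list V) : Prop :=
  match l with
  | x :: ((y :: _) as t) => adj x y /\ chain t
  | _ => True
  end.

Definition is_cycle (l : list V) : Prop :=
  match l with
  | [] => False
  | x :: _ => NoDup l /\ 3 <= length l /\ chain l /\ adj (last l x) x
  end.

Definition is_tree : Prop := connected /\ ~ (exists l, is_cycle l).

Definition has_vertex_deg_gt2 : Prop :=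
  exists v a b c, adj v a /\ adj v b /\ adj v c /\ a <> b /\ a <> c /\ b <> c.

Definition induced_connected (A : list V) : Prop :=
  forall x y, In x A -> In y A -> walk_in (fun z => In z A) x y.

Definition part_iso (side : V -> bool) (A B : list V) (f : V -> V) : Prop :=
  (forall x, In x A -> In (f x) B) /\
  (forall x y, In x A -> In y A -> f x = f y -> x = y) /\
  (forall y, In y B -> exists x, In x A /\ f x = y) /\
  (forall x y, In x A -> In y A -> (adj x y <-> adj (f x) (f y))) /\
  (forall x, In x A -> side (f x) = side x).

Definition bip_automorphism (side : V -> bool) (g : V -> V) : Prop :=
  (exists h : V -> V, (forall x, h (g x) = x) /\ (forall y, g (h y) = y)) /\
  (forall x y, adj x y <-> adj (g x) (g y)) /\
  (forall x, side (g x) = side x).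

Definition connected_homogeneous_bip (side : V -> bool) : Prop :=
  forall (A B : list V) (f : V -> V),
    induced_connected A -> induced_connected B -> part_iso side A B f ->
    exists g, bip_automorphism side g /\ (forall x, In x A -> g x = f x).

Definition embeds_induced_C4 : Prop :=
  exists a b c d : V,
    a <> b /\ a <> c /\ a <> d /\ b <> c /\ b <> d /\ c <> d /\
    adj a b /\ adj b c /\ adj c d /\ adj d a /\ ~ adj a c /\ ~ adj b d.

End Graphs.

(** Suppose there is no induced 4-cycle and take a shortest cycle [f 0 ... f (n-1)]
    (bipartiteness and the absence of squares force [n >= 6]); by homogeneity on each
    side we may assume [f 0] has a third neighbour [w].  The path [f 0 ... f (n-3)] has
    exactly one neighbour in both [f (n-1)] and [w], so an automorphism fixing the path
    swaps them, and the image [u] of [f (n-2)] closes the walk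
    [f (n-3), f (n-2), f (n-1), f 0, w, u] into a 6-cycle.  For [n > 6] this contradicts
    minimality.  For [n = 6], [w] lies on the side of [f 3], which has the three
    neighbours [f 2], [f 4], [u], so [w] has a neighbour [z] other than [f 0] and [u];
    an automorphism fixing [w, f 0, f 1, f 2, f 4, f 5] and sending [u] to [z] moves
    [f 3] to a common neighbour of [f 2], [f 4] and [z], and either outcome yields a
    4-cycle. *)

From Stdlib Require Import List Lia Arith Wf_nat Classical ClassicalEpsilon.
Import ListNotations.

Section ConnectedHomogeneous.

Variable V : Type.
Variable adj : V -> V -> Prop.
Variable side : V -> bool.
Hypothesis adj_simple : simple_graph adj.
Hypothesis adj_bipartite : bipartite_wrt adj side.

Lemma adj_sym x y : adj x y -> adj y x.
Proof. apply (proj1 adj_simple). Qed.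

Lemma adj_neq x y : adj x y -> x <> y.
Proof. intros Hxy <-. exact (proj2 adj_simple x Hxy). Qed.

Lemma adj_side x y : adj x y -> side y = negb (side x).
Proof.
  intros Hxy. pose proof (adj_bipartite x y Hxy).
  destruct (side x), (side y); simpl; congruence.
Qed.

Lemma same_side_nadj x y : side x = side y -> ~ adj x y.
Proof. intros E Hxy. exact (adj_bipartite x y Hxy E). Qed.

Lemma side_neq x y : side x <> side y -> x <> y.
Proof. congruence. Qed.

Definition square_free : Prop :=
  forall a b c d, adj a b -> adj b c -> adj c d -> adj d a -> a <> c -> b <> d -> False.

(* In a bipartite graph every 4-cycle is induced: opposite corners lie on one side. *)
Lemma square_free_of_no_induced_C4 : ~ embeds_induced_C4 adj -> square_free.
Proof.
  intros HnC4 a b c d Hab Hbc Hcd Hda Hac Hbd. apply HnC4.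
  exists a, b, c, d.
  repeat split; auto using adj_neq.
  - apply not_eq_sym, adj_neq; auto.
  - apply same_side_nadj. rewrite (adj_side b c), (adj_side a b) by auto.
    destruct (side a); reflexivity.
  - apply same_side_nadj. rewrite (adj_side c d), (adj_side b c) by auto.
    destruct (side b); reflexivity.
Qed.

Lemma walk_in_mono (P Q : V -> Prop) x y :
  (forall z, P z -> Q z) -> walk_in adj P x y -> walk_in adj Q x y.
Proof.
  intros HPQ W. induction W; [apply walk_refl | eapply walk_step]; eauto.
Qed.

Lemma walk_in_snoc P x y z : walk_in adj P x y -> adj y z -> P z -> walk_in adj P x z.
Proof.
  intros W. induction W; intros Hyz Hz; eapply walk_step; eauto using walk_refl.
Qed.

Lemma induced_connected_single x : induced_connected adj [x].
Proof. intros a b [<-|[]] [<-|[]]. apply walk_refl. now left. Qed.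

Lemma induced_connected_cons x y A :
  induced_connected adj A -> In y A -> adj x y -> induced_connected adj (x :: A).
Proof.
  intros HA Hy Hxy a b Ha Hb.
  assert (Hlift : forall c d, In c A -> In d A -> walk_in adj (fun z => In z (x :: A)) c d).
  { intros c d Hc Hd. eapply walk_in_mono; [|apply HA; eauto]. now right. }
  destruct Ha as [<-|Ha], Hb as [<-|Hb].
  - apply walk_refl. now left.
  - eapply walk_step; [now left | exact Hxy | now apply Hlift].
  - eapply walk_in_snoc; [apply (Hlift a y) | apply adj_sym | left]; auto.
  - now apply Hlift.
Qed.

Lemma induced_connected_path (f : nat -> V) s k :
  (forall i, s <= i -> S i < s + S k -> adj (f i) (f (S i))) ->
  induced_connected adj (map f (seq s (S k))).
Proof.
  revert s. induction k as [|k IH]; intros s Hpath.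
  - apply induced_connected_single.
  - change (induced_connected adj (f s :: map f (seq (S s) (S k)))).
    apply (induced_connected_cons _ (f (S s))).
    + apply IH. intros i Hi1 Hi2. apply Hpath; lia.
    + now left.
    + apply Hpath; lia.
Qed.

(** * Automorphisms given by homogeneity *)

Hypothesis adj_homogeneous : connected_homogeneous_bip adj side.

Lemma automorphism_adj g x y : bip_automorphism adj side g -> adj x y -> adj (g x) (g y).
Proof. intros [_ [Hg _]] Hxy. now apply (Hg x y). Qed.

Lemma automorphism_inj g x y : bip_automorphism adj side g -> g x = g y -> x = y.
Proof. intros [[h [Hhg _]] _] E. now rewrite <- (Hhg x), <- (Hhg y), E. Qed.

Lemma automorphism_map_side v v' :
  side v = side v' -> exists g, bip_automorphism adj side g /\ g v = v'.
Proof.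
  intros Hs.
  destruct (adj_homogeneous [v] [v'] (fun _ => v')
              (induced_connected_single v) (induced_connected_single v'))
    as [g [Hg Hgv]].
  - split; [|split; [|split; [|split]]].
    + intros x _. now left.
    + intros x y [<-|[]] [<-|[]] _. reflexivity.
    + intros y [<-|[]]. exists v. split; [now left | reflexivity].
    + intros x y [<-|[]] [<-|[]].
      split; intros Hxx; exfalso; exact (adj_neq _ _ Hxx eq_refl).
    + intros x [<-|[]]. now symmetry.
  - exists g. split; auto. apply Hgv. now left.
Qed.

Definition swap_vertex (a b : V) : V -> V :=
  fun v => if excluded_middle_informative (v = a) then b else v.

Lemma swap_pendants a b t T :
  induced_connected adj T -> In t T -> ~ In a T -> ~ In b T ->
  adj a t -> adj b t ->
  (forall x, In x T -> adj a x -> x = t) -> (forall x, In x T -> adj b x -> x = t) ->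
  exists g, bip_automorphism adj side g /\ g a = b /\ forall x, In x T -> g x = x.
Proof.
  intros HT Ht Ha Hb Hat Hbt Ha_only Hb_only.
  set (s := swap_vertex a b).
  assert (Hsa : s a = b).
  { unfold s, swap_vertex. now destruct (excluded_middle_informative (a = a)). }
  assert (HsT : forall x, In x T -> s x = x).
  { intros x Hx. unfold s, swap_vertex.
    destruct (excluded_middle_informative (x = a)); [subst x; contradiction | reflexivity]. }
  clearbody s.
  assert (Hab_T : forall x, In x T -> adj a x <-> adj b x).
  { intros x Hx. split; intros Hx'.
    - rewrite (Ha_only x Hx Hx'). exact Hbt.
    - rewrite (Hb_only x Hx Hx'). exact Hat. }
  destruct (adj_homogeneous (a :: T) (b :: T) s) as [g [Hg Hgs]].
  - now apply (induced_connected_cons _ t).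
  - now apply (induced_connected_cons _ t).
  - split; [|split; [|split; [|split]]].
    + intros x [<-|Hx]; [rewrite Hsa | rewrite HsT by auto]; simpl; auto.
    + intros x y [<-|Hx] [<-|Hy]; rewrite ?Hsa, ?HsT by auto; intros E;
        subst; auto; contradiction.
    + intros y [<-|Hy]; [exists a | exists y]; simpl; auto.
    + intros x y [<-|Hx] [<-|Hy]; rewrite ?Hsa, ?HsT by auto.
      * split; intros Hxy; exfalso; exact (adj_neq _ _ Hxy eq_refl).
      * now apply Hab_T.
      * split; intros Hxy; apply adj_sym; apply Hab_T; auto; now apply adj_sym.
      * reflexivity.
    + intros x [<-|Hx]; [rewrite Hsa | rewrite HsT by auto]; auto.
      rewrite (adj_side t a), (adj_side t b); auto using adj_sym.
  - exists g. split; [exact Hg | split].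
    + rewrite Hgs; [exact Hsa | now left].
    + intros x Hx. rewrite Hgs; [now apply HsT | now right].
Qed.

Definition deg_gt2 v : Prop :=
  exists a b c, adj v a /\ adj v b /\ adj v c /\ a <> b /\ a <> c /\ b <> c.

Lemma deg_gt2_same_side v v' : side v = side v' -> deg_gt2 v -> deg_gt2 v'.
Proof.
  intros Hs (a & b & c & Ha & Hb & Hc & Hab & Hac & Hbc).
  destruct (automorphism_map_side v v' Hs) as [g [Hg <-]].
  exists (g a), (g b), (g c).
  repeat split; try (apply automorphism_adj; auto);
    intros E; apply (automorphism_inj g) in E; auto.
Qed.

Lemma deg_gt2_neighbour_avoiding v p q : deg_gt2 v -> exists z, adj v z /\ z <> p /\ z <> q.
Proof.
  intros (a & b & c & Ha & Hb & Hc & Hab & Hac & Hbc).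
  destruct (classic (a <> p /\ a <> q)) as [H|Ha']; [exists a; tauto|].
  destruct (classic (b <> p /\ b <> q)) as [H|Hb']; [exists b; tauto|].
  exists c. split; auto.
  apply not_and_or in Ha', Hb'.
  destruct Ha' as [Ha'|Ha'], Hb' as [Hb'|Hb']; apply NNPP in Ha', Hb'; subst; split; congruence.
Qed.

Definition ncycle (f : nat -> V) (n : nat) : Prop :=
  3 <= n /\ (forall i j, i < n -> j < n -> f i = f j -> i = j) /\
  (forall i, S i < n -> adj (f i) (f (S i))) /\ adj (f (n - 1)) (f 0).

Lemma chain_nth d l :
  chain adj l -> forall i, S i < length l -> adj (nth i l d) (nth (S i) l d).
Proof.
  induction l as [|a [|b t] IH]; intros Hc i Hi; simpl in Hi; try lia.
  destruct Hc as [Hab Hc]. destruct i as [|i]; [exact Hab|].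
  apply (IH Hc i). simpl. lia.
Qed.

Lemma last_nth (l : list V) d : l <> [] -> last l d = nth (length l - 1) l d.
Proof.
  induction l as [|a [|b t] IH]; intros Hl; [congruence | reflexivity |].
  simpl in *. rewrite Nat.sub_0_r in IH. apply IH. discriminate.
Qed.

Lemma ncycle_of_is_cycle l : is_cycle adj l -> exists f n, ncycle f n.
Proof.
  destruct l as [|x t]; simpl; [tauto|].
  intros [Hnd [Hlen [Hc Hl]]].
  exists (fun i => nth i (x :: t) x), (length (x :: t)).
  repeat split.
  - simpl. lia.
  - now apply NoDup_nth.
  - now apply chain_nth.
  - rewrite <- last_nth; [exact Hl | discriminate].
Qed.

Lemma shortest_ncycle :
  (exists f n, ncycle f n) -> exists f n, ncycle f n /\ forall g k, k < n -> ~ ncycle g k.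
Proof.
  intros [f0 [n0 Hc0]].
  destruct (dec_inh_nat_subset_has_unique_least_element (fun n => exists f, ncycle f n)
              (fun n => classic _) (ex_intro _ n0 (ex_intro _ f0 Hc0)))
    as [n [[[f Hf] Hleast] _]].
  exists f, n. split; auto.
  intros g k Hk Hg. specialize (Hleast k (ex_intro _ g Hg)). lia.
Qed.

Lemma ncycle_rotate f n : ncycle f n -> exists g, ncycle g n /\ g 0 = f 1.
Proof.
  intros [Hn [Hinj [Hstep Hclose]]].
  exists (fun t => if Nat.ltb t (n - 1) then f (S t) else f 0).
  split; [repeat split |].
  - exact Hn.
  - intros a b Ha Hb.
    destruct (Nat.ltb_spec a (n - 1)), (Nat.ltb_spec b (n - 1)); intros E;
      apply Hinj in E; lia.
  - intros a Ha. destruct (Nat.ltb_spec a (n - 1)); [|lia].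
    destruct (Nat.ltb_spec (S a) (n - 1)).
    + apply Hstep. lia.
    + replace (S a) with (n - 1) by lia. exact Hclose.
  - destruct (Nat.ltb_spec (n - 1) (n - 1)), (Nat.ltb_spec 0 (n - 1)); try lia.
    apply Hstep. lia.
  - destruct (Nat.ltb_spec 0 (n - 1)); [reflexivity | lia].
Qed.

Lemma ncycle_chord f n i j :
  ncycle f n -> i < j -> j < n -> 2 <= j - i -> adj (f i) (f j) ->
  ncycle (fun t => f (i + t)) (j - i + 1).
Proof.
  intros [Hn [Hinj [Hstep Hclose]]] Hij Hj Hji Hchord. repeat split.
  - lia.
  - intros a b Ha Hb E. apply Hinj in E; lia.
  - intros a Ha. rewrite Nat.add_succ_r. apply Hstep. lia.
  - rewrite Nat.add_0_r. replace (i + (j - i + 1 - 1)) with j by lia.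
    now apply adj_sym.
Qed.

Lemma ncycle_detour f n w j :
  ncycle f n -> 2 <= j -> j < n -> (forall k, k < n -> w <> f k) ->
  adj w (f 0) -> adj w (f j) ->
  ncycle (fun t => match t with 0 => w | S t' => f t' end) (j + 2).
Proof.
  intros [Hn [Hinj [Hstep Hclose]]] Hj2 Hj Hoff Hw0 Hwj. repeat split.
  - lia.
  - intros [|a] [|b] Ha Hb E; auto.
    + exfalso. apply (Hoff b); auto. lia.
    + exfalso. apply (Hoff a); auto. lia.
    + f_equal. apply Hinj; auto; lia.
  - intros [|a] Ha; [exact Hw0 | apply Hstep; lia].
  - replace (j + 2 - 1) with (S j) by lia. now apply adj_sym.
Qed.

Lemma ncycle6 a b c d e k :
  adj a b -> adj b c -> adj c d -> adj d e -> adj e k -> adj k a ->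
  a <> c -> a <> d -> a <> e -> b <> d -> b <> e -> b <> k -> c <> e -> c <> k -> d <> k ->
  ncycle (fun t => nth t [a; b; c; d; e; k] a) 6.
Proof.
  intros. repeat split.
  - lia.
  - intros t t' Ht Ht' E.
    destruct t as [|[|[|[|[|[|t]]]]]]; try lia;
      destruct t' as [|[|[|[|[|[|t']]]]]]; try lia; simpl in E;
      solve [reflexivity | congruence | subst; exfalso; eapply (proj2 adj_simple); eassumption].
  - intros t Ht. destruct t as [|[|[|[|[|t]]]]]; simpl; auto; lia.
  - simpl. auto.
Qed.

(** * A shortest cycle in a square-free graph *)

Section ShortestCycle.

Hypothesis no_square : square_free.
Variable f : nat -> V.
Variable n : nat.
Hypothesis f_cycle : ncycle f n.
Hypothesis f_shortest : forall g k, k < n -> ~ ncycle g k.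

Lemma cycle_adj i j :
  i < n -> j < n -> j = S i \/ i = S j \/ (i = 0 /\ j = n - 1) \/ (i = n - 1 /\ j = 0) ->
  adj (f i) (f j).
Proof.
  destruct f_cycle as [_ [_ [Hstep Hclose]]].
  intros Hi Hj [->|[->|[[-> ->]|[-> ->]]]].
  - now apply Hstep.
  - now apply adj_sym, Hstep.
  - now apply adj_sym.
  - exact Hclose.
Qed.

Lemma cycle_neq i j : i < n -> j < n -> i <> j -> f i <> f j.
Proof. destruct f_cycle as [_ [Hinj _]]. intros Hi Hj Hij E. exact (Hij (Hinj i j Hi Hj E)). Qed.

Ltac cycle_fact := first [apply cycle_adj; lia | apply cycle_neq; lia].

Lemma cycle_chordless i j :
  i < j -> j < n -> adj (f i) (f j) -> j = S i \/ (i = 0 /\ j = n - 1).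
Proof.
  intros Hij Hj Hchord. apply NNPP. intros Hnot.
  apply (f_shortest (fun t => f (i + t)) (j - i + 1)); [lia|].
  apply (ncycle_chord f n); auto. lia.
Qed.

Lemma cycle_side i : i < n -> side (f i) = xorb (Nat.odd i) (side (f 0)).
Proof.
  induction i as [|i IH]; intros Hi.
  - now destruct (side (f 0)).
  - rewrite (adj_side (f i)) by cycle_fact. rewrite IH by lia.
    rewrite Nat.odd_succ, <- Nat.negb_odd.
    destruct (Nat.odd i), (side (f 0)); reflexivity.
Qed.

Lemma six_le_cycle_length : 6 <= n.
Proof.
  destruct f_cycle as [Hn _].
  assert (Hodd : Nat.odd (n - 1) = true).
  { pose proof (adj_side (f (n - 1)) (f 0) ltac:(cycle_fact)) as Hs.
    rewrite (cycle_side (n - 1)) in Hs by lia.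
    destruct (Nat.odd (n - 1)), (side (f 0)); easy. }
  destruct (le_lt_dec 6 n) as [|Hlt]; [assumption | exfalso].
  assert (Hsmall : n = 3 \/ n = 4 \/ n = 5) by lia.
  destruct Hsmall as [E|[E|E]]; rewrite E in Hodd; try discriminate Hodd.
  apply (no_square (f 0) (f 1) (f 2) (f 3)); cycle_fact.
Qed.

Section Pendant.

Variable w : V.
Hypothesis w_adj : adj (f 0) w.
Hypothesis w_neq_next : w <> f 1.
Hypothesis w_neq_prev : w <> f (n - 1).

Lemma pendant_off_cycle k : k < n -> w <> f k.
Proof.
  intros Hk E. rewrite E in w_adj.
  destruct k as [|k]; [exact (adj_neq _ _ w_adj eq_refl)|].
  destruct (cycle_chordless 0 (S k)) as [Ek|[_ Ek]]; auto; try lia.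
  - apply w_neq_next. now rewrite E, Ek.
  - apply w_neq_prev. now rewrite E, Ek.
Qed.

Lemma pendant_nonadj j : 1 <= j -> j <= n - 2 -> ~ adj w (f j).
Proof.
  pose proof six_le_cycle_length as Hn.
  intros Hj1 Hj2 Hwj.
  destruct (Nat.eq_dec j 1) as [->|Hj1'].
  { revert Hwj. apply same_side_nadj.
    rewrite (adj_side (f 0) w), (adj_side (f 0) (f 1)); auto. cycle_fact. }
  destruct (Nat.eq_dec j (n - 2)) as [Ej|Hj2'].
  - rewrite Ej in Hwj.
    apply (no_square w (f 0) (f (n - 1)) (f (n - 2)));
      auto using adj_sym; cycle_fact.
  - apply (f_shortest (fun t => match t with 0 => w | S t' => f t' end) (j + 2)); [lia|].
    apply (ncycle_detour f n w j); auto using adj_sym, pendant_off_cycle; lia.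
Qed.

Lemma pendant_reroute : exists u, adj u w /\ adj u (f (n - 3)) /\ u <> f (n - 2).
Proof.
  pose proof six_le_cycle_length as Hn.
  set (T := map f (seq 0 (n - 2))).
  assert (HT : forall x, In x T <-> exists k, k < n - 2 /\ x = f k).
  { intros x. unfold T. rewrite in_map_iff. split.
    - intros [k [<- Hk]]. apply in_seq in Hk. exists k. split; [lia | reflexivity].
    - intros [k [Hk ->]]. exists k. split; [reflexivity | apply in_seq; lia]. }
  destruct (swap_pendants (f (n - 1)) w (f 0) T) as [g [Hg [Hgw HgT]]].
  - unfold T. replace (n - 2) with (S (n - 3)) by lia.
    apply induced_connected_path. intros i _ Hi. cycle_fact.
  - apply HT. exists 0. split; [lia | reflexivity].
  - intros [k [Hk E]]%HT. revert E. cycle_fact.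
  - intros [k [Hk E]]%HT. exact (pendant_off_cycle k ltac:(lia) E).
  - cycle_fact.
  - now apply adj_sym.
  - intros x [k [Hk ->]]%HT Hadj.
    destruct (cycle_chordless k (n - 1)) as [Ek|[-> _]]; auto using adj_sym; lia.
  - intros x [k [Hk ->]]%HT Hadj.
    destruct k as [|k]; [reflexivity|].
    exfalso. exact (pendant_nonadj (S k) ltac:(lia) ltac:(lia) Hadj).
  - set (u := g (f (n - 2))).
    assert (Hu_w : adj u w).
    { rewrite <- Hgw. apply automorphism_adj; [exact Hg | cycle_fact]. }
    exists u. split; [exact Hu_w | split].
    + rewrite <- (HgT (f (n - 3))) by (apply HT; exists (n - 3); split; [lia | reflexivity]).
      apply automorphism_adj; [exact Hg | cycle_fact].
    + intros E. rewrite E in Hu_w.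
      exact (pendant_nonadj (n - 2) ltac:(lia) ltac:(lia) (adj_sym _ _ Hu_w)).
Qed.

Lemma cycle_length_six : n = 6.
Proof.
  pose proof six_le_cycle_length as Hn.
  destruct pendant_reroute as [u [Hu_w [Hu_3 Hu_2]]].
  apply NNPP. intros Hn6.
  assert (Hu_0 : u <> f 0).
  { intros E. rewrite E in Hu_3.
    destruct (cycle_chordless 0 (n - 3)) as [?|[_ ?]]; auto; lia. }
  assert (Hu_prev : u <> f (n - 1)).
  { intros E. rewrite E in Hu_3.
    destruct (cycle_chordless (n - 3) (n - 1)) as [?|[? _]]; auto using adj_sym; lia. }
  apply (f_shortest (fun t => nth t [f (n - 2); f (n - 1); f 0; w; u; f (n - 3)] (f (n - 2))) 6);
    [lia|].
  apply ncycle6; auto using adj_sym;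
    try (apply pendant_off_cycle; lia);
    try (apply not_eq_sym, pendant_off_cycle; lia);
    try (apply not_eq_sym; assumption); cycle_fact.
Qed.

Lemma cycle_length_not_six : n <> 6.
Proof.
  intros Hn6.
  destruct pendant_reroute as [u [Hu_w [Hu_3 Hu_4]]].
  replace (n - 3) with 3 in Hu_3 by lia. replace (n - 2) with 4 in Hu_4 by lia.
  remember (side (f 0)) as s0 eqn:Hs0.
  assert (Hside_f : forall i, i < 6 -> side (f i) = xorb (Nat.odd i) s0).
  { intros i Hi. subst s0. apply cycle_side. lia. }
  assert (Hside_w : side w = negb s0) by (subst s0; now apply adj_side).
  assert (Hside_u : side u = s0).
  { rewrite (adj_side w u), Hside_w by now apply adj_sym. now destruct s0. }
  assert (Hu_2 : u <> f 2).
  { intros E. rewrite E in Hu_w.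
    exact (pendant_nonadj 2 ltac:(lia) ltac:(lia) (adj_sym _ _ Hu_w)). }
  assert (Hdeg_w : deg_gt2 w).
  { apply (deg_gt2_same_side (f 3)).
    - rewrite Hside_f, Hside_w by lia. reflexivity.
    - exists (f 2), (f 4), u. repeat split; auto using adj_sym; cycle_fact. }
  destruct (deg_gt2_neighbour_avoiding w (f 0) u Hdeg_w) as [z [Hz_w [Hz_0 Hz_u]]].
  assert (Hside_z : side z = s0) by (rewrite (adj_side w z), Hside_w by auto; now destruct s0).
  set (T := [w; f 4; f 5; f 2; f 1; f 0]).
  assert (HT : induced_connected adj T).
  { apply (induced_connected_cons _ (f 0)); [|simpl; tauto | now apply adj_sym].
    apply (induced_connected_cons _ (f 5)); [|simpl; tauto | cycle_fact].
    apply (induced_connected_cons _ (f 0)); [|simpl; tauto | cycle_fact].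
    apply (induced_connected_cons _ (f 1)); [|simpl; tauto | cycle_fact].
    apply (induced_connected_cons _ (f 0)); [|simpl; tauto | cycle_fact].
    apply induced_connected_single. }
  (* [u] and [z] lie on the side of [f 0], [f 2], [f 4]; an edge to [f 1] or [f 5] closes a square. *)
  destruct (swap_pendants u z w T) as [g [Hg [Hgu HgT]]];
    [exact HT | now left | | | exact Hu_w | now apply adj_sym | | |].
  - intros [E|[E|[E|[E|[E|[E|[]]]]]]].
    + exact (adj_neq _ _ Hu_w (eq_sym E)).
    + exact (Hu_4 (eq_sym E)).
    + revert E. apply side_neq. rewrite Hside_f, Hside_u by lia. now destruct s0.
    + exact (Hu_2 (eq_sym E)).
    + revert E. apply side_neq. rewrite Hside_f, Hside_u by lia. now destruct s0.
    + rewrite <- E in Hu_3.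
      destruct (cycle_chordless 0 3) as [?|[_ ?]]; auto; lia.
  - intros [E|[E|[E|[E|[E|[E|[]]]]]]].
    + exact (adj_neq _ _ Hz_w E).
    + rewrite <- E in Hz_w. exact (pendant_nonadj 4 ltac:(lia) ltac:(lia) Hz_w).
    + revert E. apply side_neq. rewrite Hside_f, Hside_z by lia. now destruct s0.
    + rewrite <- E in Hz_w. exact (pendant_nonadj 2 ltac:(lia) ltac:(lia) Hz_w).
    + revert E. apply side_neq. rewrite Hside_f, Hside_z by lia. now destruct s0.
    + exact (Hz_0 (eq_sym E)).
  - intros x [<-|[<-|[<-|[<-|[<-|[<-|[]]]]]]] Hx; try reflexivity; exfalso.
    + revert Hx. apply same_side_nadj. rewrite Hside_f, Hside_u by lia. now destruct s0.
    + exact (no_square u (f 5) (f 4) (f 3) Hx ltac:(cycle_fact) ltac:(cycle_fact)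
               (adj_sym _ _ Hu_3) Hu_4 ltac:(cycle_fact)).
    + revert Hx. apply same_side_nadj. rewrite Hside_f, Hside_u by lia. now destruct s0.
    + exact (no_square u (f 1) (f 2) (f 3) Hx ltac:(cycle_fact) ltac:(cycle_fact)
               (adj_sym _ _ Hu_3) Hu_2 ltac:(cycle_fact)).
    + revert Hx. apply same_side_nadj. rewrite Hside_f, Hside_u by lia. now destruct s0.
  - intros x [<-|[<-|[<-|[<-|[<-|[<-|[]]]]]]] Hx; try reflexivity; exfalso.
    + revert Hx. apply same_side_nadj. rewrite Hside_f, Hside_z by lia. now destruct s0.
    + exact (no_square z (f 5) (f 0) w Hx ltac:(cycle_fact) w_adj Hz_w Hz_0
               (not_eq_sym (pendant_off_cycle 5 ltac:(lia)))).
    + revert Hx. apply same_side_nadj. rewrite Hside_f, Hside_z by lia. now destruct s0.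
    + exact (no_square z (f 1) (f 0) w Hx ltac:(cycle_fact) w_adj Hz_w Hz_0
               (not_eq_sym w_neq_next)).
    + revert Hx. apply same_side_nadj. rewrite Hside_f, Hside_z by lia. now destruct s0.
  - assert (Hy_2 : adj (g (f 3)) (f 2)).
    { rewrite <- (HgT (f 2)) by (simpl; tauto). apply automorphism_adj; [exact Hg | cycle_fact]. }
    assert (Hy_4 : adj (g (f 3)) (f 4)).
    { rewrite <- (HgT (f 4)) by (simpl; tauto). apply automorphism_adj; [exact Hg | cycle_fact]. }
    assert (Hy_z : adj (g (f 3)) z).
    { rewrite <- Hgu. apply automorphism_adj; [exact Hg | now apply adj_sym]. }
    destruct (classic (g (f 3) = f 3)) as [Ey|Ny].
    + rewrite Ey in Hy_z.
      exact (no_square w u (f 3) z (adj_sym _ _ Hu_w) Hu_3 Hy_z (adj_sym _ _ Hz_w)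
               (pendant_off_cycle 3 ltac:(lia)) (not_eq_sym Hz_u)).
    + exact (no_square (f 3) (f 2) (g (f 3)) (f 4) ltac:(cycle_fact) (adj_sym _ _ Hy_2) Hy_4
               ltac:(cycle_fact) (not_eq_sym Ny) ltac:(cycle_fact)).
Qed.

End Pendant.

Lemma shortest_cycle_start_not_deg_gt2 : ~ deg_gt2 (f 0).
Proof.
  intros Hdeg.
  destruct (deg_gt2_neighbour_avoiding (f 0) (f 1) (f (n - 1)) Hdeg) as [w [Hw [Hw1 Hw2]]].
  exact (cycle_length_not_six w Hw Hw1 Hw2 (cycle_length_six w Hw Hw1 Hw2)).
Qed.

End ShortestCycle.

End ConnectedHomogeneous.

Theorem lemma4p4 (V : Type) (adj : V -> V -> Prop) (side : V -> bool) :
  simple_graph adj ->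
  bipartite_wrt adj side ->
  connected adj ->
  connected_homogeneous_bip adj side ->
  locally_finite adj ->
  ~ is_tree adj ->
  has_vertex_deg_gt2 adj ->
  embeds_induced_C4 adj.
Proof.
  intros Hsimple Hbip Hconn Hhom _ Hnot_tree [p Hp].
  apply NNPP. intros HnC4.
  pose proof (square_free_of_no_induced_C4 V adj side Hsimple Hbip HnC4) as Hsq.
  assert (Hcycle : exists l, is_cycle adj l).
  { apply NNPP. intros Hno. apply Hnot_tree. split; assumption. }
  destruct Hcycle as [l Hl].
  destruct (shortest_ncycle V adj (ncycle_of_is_cycle V adj l Hl)) as [f [n [Hf Hshort]]].
  (* Either [f 0] or [f 1] lies on the side of [p]. *)
  destruct (Bool.bool_dec (side (f 0)) (side p)) as [Hs|Hs].
  - apply (shortest_cycle_start_not_deg_gt2 V adj side Hsimple Hbip Hhom Hsq f n Hf Hshort).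
    exact (deg_gt2_same_side V adj side Hsimple Hhom p (f 0) (eq_sym Hs) Hp).
  - destruct (ncycle_rotate V adj f n Hf) as [g [Hg Hg0]].
    apply (shortest_cycle_start_not_deg_gt2 V adj side Hsimple Hbip Hhom Hsq g n Hg Hshort).
    apply (deg_gt2_same_side V adj side Hsimple Hhom p); auto.
    destruct Hf as [Hn [_ [Hstep _]]].
    rewrite Hg0, (adj_side V adj side Hbip (f 0) (f 1)) by (apply Hstep; lia).
    destruct (side (f 0)), (side p); simpl in *; congruence.
Qed.
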